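(* For $j=0,\dots,n$, $$\varphi(y_j)=\sum_{i=0}^{\min(j,n-j)}2^{2i}\binom{n-2i}{j-i}\,p_i.$$
   Context: $B_n$: signed permutations $w=w_1\dots w_n$, values ordered $\cdots<-2<-1<1<2<\cdots$, $w_0=0$; $\mathrm{Des}(w)=\{i\in\{0,\dots,n-1\}:w_i>w_{i+1}\}$. $y_j=\sum_{w\in B_n,\ \#\mathrm{Des}(w)=j}w$. $\varphi$: linear extension of $w\mapsto|w_1|\dots|w_n|$ from $\mathbb{Q}B_n$ to $\mathbb{Q}\mathfrak{S}_n$. For $u\in\mathfrak{S}_n$, $\mathrm{Peak}(u)=\{i\in[n-1]:u_{i-1}<u_i>u_{i+1}\}$ with $u_0=0$, and $p_i=\sum_{u\in\mathfrak{S}_n,\ \#\mathrm{Peak}(u)=i}u$ for $0\le i\le\lfloor n/2\rfloor$. *)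

From mathcomp Require Import all_boot all_order all_algebra all_fingroup.
Set Implicit Arguments. Unset Strict Implicit. Unset Printing Implicit Defensive.
Import GRing.Theory Num.Theory.
Local Open Scope ring_scope.

(* Signed permutations of [n]: a permutation s of 'I_n together with a sign
   vector e; the one-line word is w_k = (if e (k-1) then -1 else 1) * (s (k-1) + 1)
   for k = 1..n (values in {+-1,...,+-n}), with w_0 = 0. *)
Definition signed_perm (n : nat) := ('S_n * {ffun 'I_n -> bool})%type.

Definition bval n (w : signed_perm n) (k : nat) : int :=
  match k with
  | 0 => 0
  | k'.+1 =>
      if insub k' is Some i then
        (if w.2 i then - ((w.1 i).+1%:Z) else (w.1 i).+1%:Z)
      else 0
  end.

Definition ndes n (w : signed_perm n) : nat :=
  #|[set i : 'I_n | bval w (i.+1) < bval w i]|.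

Definition pval n (u : 'S_n) (k : nat) : nat :=
  match k with
  | 0 => 0%N
  | k'.+1 => if insub k' is Some i then (u i).+1 else 0%N
  end.

Definition npeak n (u : 'S_n) : nat :=
  #|[set i : 'I_n | (0 < i)%N && (pval u (i.-1) < pval u i)%N
                     && (pval u (i.+1) < pval u i)%N]|.

(* Elements of the group algebras QB_n and QS_n, as coefficient vectors. *)
Notation QB n := {ffun signed_perm n -> rat}.
Notation QS n := {ffun 'S_n -> rat}.

Definition y n (j : nat) : QB n := [ffun w => ((ndes w == j) : nat)%:R].

Definition p n (i : nat) : QS n := [ffun u => ((npeak u == i) : nat)%:R].

(* phi: linear extension of w |-> |w_1| ... |w_n| (i.e. w |-> w.1) *)
Definition phi n (x : QB n) : QS n :=
  [ffun u => \sum_(w : signed_perm n | w.1 == u) x w].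

(* Fix |w| = u and let the signs vary.  A descent of w at i lies either at an
   ascent u_i < u_(i+1), where it occurs iff w_(i+1) is negative, or at a
   descent of u, where it occurs iff w_i is positive.  Charging each descent to
   that sign makes des(w) a sum of independent contributions of the n signs, so
   the descent generating polynomial of the fibre over u is a product of n
   factors x^(c_k(+)) + x^(c_k(-)).  The k-th factor is 2x when sign k is
   charged from both sides (u has a peak at k+1), 2 when it is charged from
   neither side (a valley of u, or a final descent), and 1 + x otherwise.  As u
   has as many such valleys as peaks, the fibre polynomial is
   4^pk x^pk (1 + x)^(n - 2 pk) with pk = #Peak(u), whose coefficient of x^j
   is 2^(2 pk) C(n - 2 pk, j - pk). *)

From Pilot Require Import Defs.
From mathcomp Require Import all_boot all_order all_algebra all_fingroup.
From mathcomp Require Import zify ring.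
(* [perm] also exports a [pval]; re-importing [Defs] makes [pval] mean
   [Defs.pval] again. *)
Import Defs.
Set Implicit Arguments. Unset Strict Implicit. Unset Printing Implicit Defensive.
Import GRing.Theory Num.Theory.
Local Open Scope ring_scope.

Lemma coef_1DXn (R : nzRingType) m k :
  ((1 + 'X : {poly R}) ^+ m)`_k = 'C(m, k)%:R.
Proof.
have -> : (1 + 'X : {poly R}) ^+ m = \poly_(i < m.+1) 'C(m, i)%:R.
  rewrite poly_def (exprDn_comm _ (esym (commr1 _))); apply: eq_bigr => i _.
  by rewrite expr1n mul1r scaler_nat.
by rewrite coef_poly; case: ltnP => // /bin_small ->.
Qed.

Lemma sum_falls_rises (b : nat -> bool) m : b 0 ->
  (\sum_(k < m) (b k && ~~ b k.+1) =
   \sum_(k < m) (~~ b k && b k.+1) + ~~ b m)%N.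
Proof.
move=> b0; elim: m => [|m IH]; first by rewrite !big_ord0 b0.
rewrite !big_ord_recr /= IH.
by case: (b m); case: (b m.+1); rewrite /= ?addn0 ?addn1 ?addnS.
Qed.

Lemma signed_lt (x y : nat) (s t : bool) : (0 < y)%N -> x != y ->
  ((if t then - y%:Z else y%:Z) < (if s then - x%:Z else x%:Z)) =
  (if (x < y)%N then t else ~~ s).
Proof.
move=> y_gt0 xy; case: s; case: t; case: ltnP => xy' /=; apply/idP/idP; lia.
Qed.

Lemma sum_fst_eq (R : nmodType) (I J : finType) (F : I * J -> R) i :
  \sum_(w | w.1 == i) F w = \sum_j F (i, j).
Proof.
rewrite -(big_pred1_eq +%R i (fun a => \sum_j F (a, j))) pair_big_dep.
by apply: eq_big => -[a b] //=; rewrite andbT.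
Qed.

Lemma sum_ord_indicator (R : nzSemiRingType) m k (F : nat -> nat) :
  \sum_(i < m) ((k == i :> nat) : nat)%:R *+ F i =
  (if k < m then F k else 0)%N%:R :> R.
Proof.
rewrite (eq_bigr (fun i : 'I_m => if i == k :> nat then (F i)%:R else 0)).
  rewrite -(big_mkcond (fun i : 'I_m => i == k :> nat)).
  by rewrite (big_ord1_eq _ (fun i => (F i)%:R)); case: ifP.
by move=> i _; rewrite eq_sym; case: (_ == _); rewrite ?mulr1n ?mul0rn.
Qed.

Lemma sum_ord_behead (F : nat -> nat) n : ((0 < n)%N -> F 0%N = 0%N) ->
  (\sum_(i < n) F i = \sum_(i < n.-1) F i.+1)%N.
Proof. by case: n => [|n] F0; rewrite ?big_ord0 // big_ord_recl F0. Qed.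

Lemma sum_ord_belast (F : nat -> nat) n : ((0 < n)%N -> F n.-1 = 0%N) ->
  (\sum_(i < n) F i = \sum_(i < n.-1) F i)%N.
Proof.
by case: n => [|n] Fn; rewrite ?big_ord0 // big_ord_recr /= Fn // addn0.
Qed.

Lemma card_set_sum (T : finType) (P : pred T) :
  #|[set x | P x]| = (\sum_x P x)%N.
Proof.
by rewrite -sum1dep_card big_mkcond; apply: eq_bigr => x _; case: (P x).
Qed.

(* Descents charged to the sign [b] (true = negative) of an entry of w that
   ends an ascent ([l]) and/or starts a descent ([r]) of |w|. *)
Definition sign_charge (l r b : bool) : nat := (l && b) + (r && ~~ b).

Lemma sign_charge_poly (R : comNzRingType) (l r : bool) :
  'X^(sign_charge l r true) + 'X^(sign_charge l r false) =
  (2%:R * 'X) ^+ (l && r) * 2%:R ^+ (~~ l && ~~ r) * (1 + 'X) ^+ (l != r)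
  :> {poly R}.
Proof.
by rewrite /sign_charge; case: l; case: r; rewrite /= ?expr0 ?expr1; ring.
Qed.

Definition sign_at n (e : {ffun 'I_n -> bool}) (k : nat) : bool :=
  if insub k is Some i then e i else false.

Lemma sign_atE n (e : {ffun 'I_n -> bool}) (i : 'I_n) : sign_at e i = e i.
Proof. by rewrite /sign_at valK. Qed.

Lemma bvalE n (w : signed_perm n) k :
  bval w k = if sign_at w.2 k.-1 then - (pval w.1 k)%:Z else (pval w.1 k)%:Z.
Proof.
case: k => [|k] /=; first by case: (sign_at _ _).
by rewrite /sign_at; case: (insub k).
Qed.

Section FixedAbsoluteValues.
Variables (n : nat) (u : 'S_n).

Definition ascent k := (pval u k < pval u k.+1)%N.

(* The guard matters: [pval u n.+1 = 0] would fake a descent at position n. *)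
Definition next_descent k := (k.+1 < n)%N && ~~ ascent k.+1.

Lemma pval_succ_gt0 k : (k < n)%N -> (0 < pval u k.+1)%N.
Proof. by move=> lt_kn; rewrite /= insubT. Qed.

Lemma pval_neq_succ k : (k < n)%N -> pval u k != pval u k.+1.
Proof.
case: k => [|k] lt_kn; first by rewrite neq_ltn pval_succ_gt0.
rewrite /= !insubT ?(ltnW lt_kn) //= => lt_kn'.
by rewrite eqSS val_eqE (inj_eq perm_inj) -val_eqE /= neq_ltn ltnSn.
Qed.

Lemma ascent0 : (0 < n)%N -> ascent 0.
Proof. exact: pval_succ_gt0. Qed.

Lemma descent_at e i : (i < n)%N ->
  (bval (u, e) i.+1 < bval (u, e) i) =
  if ascent i then sign_at e i else ~~ sign_at e i.-1.
Proof.
by move=> lt_in; rewrite !bvalE signed_lt ?pval_succ_gt0 ?pval_neq_succ.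
Qed.

Lemma ndesE e :
  ndes (u, e) = (\sum_(k < n) sign_charge (ascent k) (next_descent k) (e k))%N.
Proof.
rewrite /ndes card_set_sum.
transitivity (\sum_(i < n) (ascent i && sign_at e i)
              + \sum_(i < n) (~~ ascent i && ~~ sign_at e i.-1))%N.
  rewrite -big_split; apply: eq_bigr => i _ /=; rewrite descent_at //.
  by case: (ascent i); case: (sign_at _ _); case: (sign_at _ _).
rewrite big_split /=; congr (_ + _)%N.
  by apply: eq_bigr => i _; rewrite sign_atE.
rewrite (sum_ord_behead (F := fun i => ~~ ascent i && ~~ sign_at e i.-1));
  last by move=> /ascent0 ->.
under [RHS]eq_bigr => k _ do rewrite -sign_atE.
rewrite (sum_ord_belast (F := fun k => next_descent k && ~~ sign_at e k));
  last by move=> n_gt0; rewrite /next_descent prednK // ltnn.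
by apply: eq_bigr => k _; rewrite /next_descent -ltn_predRL ltn_ord.
Qed.

Lemma npeakE : npeak u = (\sum_(k < n.-1) (ascent k && ~~ ascent k.+1))%N.
Proof.
rewrite /npeak card_set_sum.
rewrite (sum_ord_behead (F := fun i => (0 < i) && (pval u i.-1 < pval u i)
                                         && (pval u i.+1 < pval u i))%N) //.
apply: eq_bigr => k _ /=; congr (nat_of_bool (_ && _)).
have := pval_neq_succ (k := k.+1); rewrite -ltn_predRL ltn_ord => /(_ isT).
by rewrite /ascent; case: ltngtP.
Qed.

Lemma sum_peak_charges :
  (\sum_(k < n) (ascent k && next_descent k))%N = npeak u.
Proof.
rewrite npeakE (sum_ord_belast (F := fun k => ascent k && next_descent k)).
  by apply: eq_bigr => k _; rewrite /next_descent -ltn_predRL ltn_ord.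
by move=> n_gt0; rewrite /next_descent prednK // ltnn andbF.
Qed.

Lemma sum_valley_charges_eq :
  (\sum_(k < n) (~~ ascent k && ~~ next_descent k))%N =
  (\sum_(k < n) (ascent k && next_descent k))%N.
Proof.
have [n0|n_gt0] := posnP n; first by rewrite n0 !big_ord0.
rewrite -(prednK n_gt0) !big_ord_recr /= {2 4}/next_descent prednK // ltnn.
rewrite andbF addn0 andbT.
under eq_bigr => k _ do rewrite /next_descent -ltn_predRL ltn_ord /= negbK.
under [in RHS]eq_bigr => k _ do rewrite /next_descent -ltn_predRL ltn_ord.
by rewrite (sum_falls_rises _ (ascent0 n_gt0)).
Qed.

Lemma npeak_partition :
  (2 * npeak u + \sum_(k < n) (ascent k != next_descent k))%N = n.
Proof.
rewrite -sum_peak_charges mul2n -addnn -{1}sum_valley_charges_eq -!big_split /=.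
rewrite -[RHS]card_ord -sum1_card; apply: eq_bigr => k _.
by case: (ascent k); case: (next_descent k).
Qed.

Lemma double_npeak_le : (2 * npeak u <= n)%N.
Proof. by rewrite -[n in (_ <= n)%N]npeak_partition leq_addr. Qed.

Lemma sum_X_ndes (R : comNzRingType) :
  \sum_(e : {ffun 'I_n -> bool}) 'X^(ndes (u, e)) =
  (2 ^ (2 * npeak u))%:R *: ('X^(npeak u) * (1 + 'X) ^+ (n - 2 * npeak u))
  :> {poly R}.
Proof.
under eq_bigr => e _ do rewrite ndesE -prodrXr.
rewrite -(bigA_distr_bigA (fun (k : 'I_n) (b : bool) =>
  'X^(sign_charge (ascent k) (next_descent k) b) : {poly R})).
under eq_bigr => k _ do rewrite big_bool /= sign_charge_poly.
rewrite !big_split /= !prodrXr sum_valley_charges_eq sum_peak_charges.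
have -> : (\sum_(k < n) (ascent k != next_descent k) = n - 2 * npeak u)%N.
  apply: (@addnI (2 * npeak u)).
  by rewrite npeak_partition subnKC ?double_npeak_le.
by rewrite -mul_polyC polyC_natr natrX mul2n -addnn exprD exprMn; ring.
Qed.

Lemma sum_ndes_eq (R : comNzRingType) j :
  \sum_(e : {ffun 'I_n -> bool}) ((ndes (u, e) == j) : nat)%:R =
  (if npeak u <= j then 2 ^ (2 * npeak u) * 'C(n - 2 * npeak u, j - npeak u)
   else 0)%N%:R :> R.
Proof.
have -> : \sum_(e : {ffun 'I_n -> bool}) ((ndes (u, e) == j) : nat)%:R =
          (\sum_(e : {ffun 'I_n -> bool}) 'X^(ndes (u, e)) : {poly R})`_j.
  by rewrite coef_sum; apply: eq_bigr => e _; rewrite coefXn eq_sym.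
rewrite sum_X_ndes coefZ coefXnM coef_1DXn ltnNge.
by case: leqP => _ /=; rewrite ?mulr0 ?natrM.
Qed.

End FixedAbsoluteValues.

Theorem proposition6p2 (n j : nat) : (j <= n)%N ->
  phi (y n j) =
  \sum_(i < (minn j (n - j)).+1)
     p n i *+ (2 ^ (2 * i) * 'C(n - 2 * i, j - i)).
Proof.
move=> le_jn; apply/ffunP => u.
rewrite ffunE sum_fst_eq.
under eq_bigr => e _ do rewrite ffunE.
rewrite sum_ndes_eq sum_ffunE.
under eq_bigr => i _ do rewrite ffunMnE ffunE.
rewrite (sum_ord_indicator _ _ _
          (fun i => 2 ^ (2 * i) * 'C(n - 2 * i, j - i))%N).
rewrite ltnS leq_min; congr (_%:R).
have le_2P_n := double_npeak_le u.
case: leqP => //= le_Pj; case: leqP => //= lt_njP.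
by rewrite bin_small ?muln0 //; lia.
Qed.
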